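(* In any mixed signaling scheme, there is no non-splittable signal $S$ with $|\{w_1(j): j\in S\}|\ge 3$.
   Context: Setting: $n\ge 2$ bidders, $m$ item types with probabilities $p_j$, nonnegative valuations $v_{i,j}$; $\psi_{i,j}=p_jv_{i,j}$. A mixed signaling scheme is a finite signal set $\mathcal{S}$ and $\varphi:[m]\times\mathcal{S}\to[0,1]$ with $\sum_S\varphi(j,S)=1$ for each $j$; $\varphi_{j,S}=\varphi(j,S)$; a signal is identified with its support, so $j\in S$ means $\varphi_{j,S}>0$. Ties are broken by a fixed priority order on bidders; $w_1(j)$ is the bidder maximizing $\psi_{i,j}$. For a signal $S$ and a subset $T\subseteq S$ define $\mathrm{rev}_S(T)=\mathrm{max2}_i\sum_{j\in T}\varphi_{j,S}\psi_{i,j}$ (second-largest value over bidders, with multiplicity), and $\mathrm{rev}(S)=\mathrm{rev}_S(S)$. $S$ is splittable if there is a partition $S=S_1\cup\dots\cup S_t$ into $t\ge 2$ nonempty parts with $\sum_{k=1}^t\mathrm{rev}_S(S_k)\ge\mathrm{rev}(S)$; otherwise $S$ is non-splittable. *)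

From HB Require Import structures.
From mathcomp Require Import all_boot all_order all_algebra.
Set Implicit Arguments. Unset Strict Implicit. Unset Printing Implicit Defensive.
Import Order.TTheory GRing.Theory Num.Theory.
Local Open Scope ring_scope.

Section Auction.
Variables (R : realFieldType) (B I Sig : finType).

Definition psi (p : I -> R) (v : B -> I -> R) (i : B) (j : I) : R := p j * v i j.

(* second-largest value (with multiplicity) of f over the bidders:
   entry of index 1 of the values sorted in non-increasing order *)
Definition max2 (f : B -> R) : R :=
  nth 0 (sort (fun x y : R => y <= x) [seq f i | i <- enum B]) 1.

(* the signal s, identified with its support *)
Definition support (phi : I -> Sig -> R) (s : Sig) : {set I} :=
  [set j | 0 < phi j s].

Definition rev_on (phi : I -> Sig -> R) (ps : B -> I -> R) (s : Sig) (T : {set I}) : R :=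
  max2 (fun i => \sum_(j in T) phi j s * ps i j).

Definition rev_sig phi ps s := rev_on phi ps s (support phi s).

Definition splittable (phi : I -> Sig -> R) (ps : B -> I -> R) (s : Sig) : Prop :=
  exists P : {set {set I}},
    [/\ partition P (support phi s), (1 < #|P|)%N &
        rev_sig phi ps s <= \sum_(T in P) rev_on phi ps s T].

Definition non_splittable phi ps s : Prop := ~ splittable phi ps s.

Definition is_w1 (ps : B -> I -> R) (prio : B -> nat) (j : I) (i : B) : bool :=
  [forall k, (ps k j < ps i j) || ((ps k j == ps i j) && (prio i <= prio k)%N)].

Definition winners (phi : I -> Sig -> R) (ps : B -> I -> R) (prio : B -> nat) (s : Sig)
  : {set B} :=
  [set i | [exists j in support phi s, is_w1 ps prio j i]].

End Auction.

From Pilot Require Import Defs.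
From HB Require Import structures.
From mathcomp Require Import all_boot all_order all_algebra.
Import Order.TTheory GRing.Theory Num.Theory.
Local Open Scope ring_scope.
Set Implicit Arguments. Unset Strict Implicit.

(* Let c, d be two bidders whose values on S are at least rev(S), and pick a
   winner w outside {c, d}; S contains an item won by another winner. Split S
   into the items T1 won by w and the rest T2. On T1, w dominates every bidder,
   so rev_S(T1) is at least the values of both c and d on T1; on T2, rev_S(T2)
   is at least the smaller of the values of c and d. Adding up, the split
   earns at least the value of c or d on S, hence at least rev(S). *)

Section SecondLargest.
Variables (R : realFieldType) (B : finType).
Implicit Types f g : B -> R.

Let geR := fun x y : R => y <= x.

Lemma count_sort_values f (q : pred R) :
  count q (sort geR [seq f i | i <- enum B]) = #|[pred i | q (f i)]|.
Proof.
have /permP -> : perm_eq (sort geR [seq f i | i <- enum B]) [seq f i | i <- enum B].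
  by rewrite perm_sort.
rewrite count_map cardE /enum_mem size_filter -enumT /= count_filter.
by apply: eq_count => i; rewrite /= andbT.
Qed.

Lemma sort_values_max2 f : (1 < #|B|)%N ->
  exists x0 rest, [/\ sort geR [seq f i | i <- enum B] = x0 :: max2 f :: rest,
                      max2 f <= x0 & all (fun y => y <= max2 f) rest].
Proof.
move=> B_gt1.
have geR_trans : transitive geR by move=> x y z hyx hzy; exact: le_trans hzy hyx.
have sorted_values : sorted geR (sort geR [seq f i | i <- enum B]).
  by apply: sort_sorted => x y; rewrite /geR le_total.
have := size_sort geR [seq f i | i <- enum B]; rewrite size_map -cardE.
rewrite /max2 -/geR; move: sorted_values B_gt1.
case: (sort _ _) => [|x0 [|x1 rest]] /= path_s + size_s; rewrite -size_s // => _.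
case/andP: path_s => x10 path1.
by exists x0, rest; split=> //; exact: order_path_min path1.
Qed.

Lemma card_gt_max2 f : (#|[pred i | (max2 f < f i)%R]| <= 1)%N.
Proof.
have [B_le1|B_gt1] := leqP #|B| 1; first exact: leq_trans (max_card _) B_le1.
have [x0 [rest [sortE _ rest_le]]] := sort_values_max2 f B_gt1.
rewrite -count_sort_values sortE /= ltxx add0n.
suff -> : count (fun y => max2 f < y) rest = 0%N by case: (_ < x0).
by apply/eqP; rewrite -leqn0 leqNgt -has_count; apply/hasPn=> y /(allP rest_le); rewrite leNgt.
Qed.

Lemma card_ge_max2 f : (1 < #|B|)%N -> (1 < #|[pred i | (max2 f <= f i)%R]|)%N.
Proof.
move=> B_gt1; have [x0 [rest [sortE max2_le _]]] := sort_values_max2 f B_gt1.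
by rewrite -count_sort_values sortE /= lexx max2_le.
Qed.

Lemma eq_max2 f g : f =1 g -> max2 f = max2 g.
Proof. by move=> fg; rewrite /max2 (eq_map fg). Qed.

Lemma max2_ge f a b x : a != b -> x <= f a -> x <= f b -> x <= max2 f.
Proof.
move=> ab xa xb; rewrite leNgt; apply/negP => max2_lt.
have := card_gt_max2 f; rewrite leqNgt => /negP; apply; apply/card_gt1P.
by exists a, b; rewrite !inE ab (lt_le_trans max2_lt xa) (lt_le_trans max2_lt xb).
Qed.

Lemma max2_le2 f : (1 < #|B|)%N ->
  exists c d, [/\ c != d, max2 f <= f c & max2 f <= f d].
Proof.
by move=> /(card_ge_max2 f)/card_gt1P [c [d [fc fd cd]]]; exists c, d.
Qed.

(* Although max2 is not subadditive, it is once the second summand has a top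
   bidder [w] that is neither of two bidders bounding [max2 (f \+ g)]. *)
Lemma max2D_le f g c d w : c != d -> w != c -> w != d ->
  (forall i, g i <= g w) ->
  max2 (f \+ g) <= (f \+ g) c -> max2 (f \+ g) <= (f \+ g) d ->
  max2 (f \+ g) <= max2 f + max2 g.
Proof.
move=> cd wc wd g_le max2_c max2_d.
have max2_gc : g c <= max2 g by apply: (max2_ge wc).
have max2_gd : g d <= max2 g by apply: (max2_ge wd).
have [fcd|fdc] := leP (f c) (f d).
- apply: le_trans max2_c (lerD _ max2_gc); exact: max2_ge cd _ fcd.
- apply: le_trans max2_d (lerD _ max2_gd); exact: max2_ge cd (ltW fdc) _.
Qed.

End SecondLargest.

Lemma partition_setID (T : finType) (A C : {set T}) :
  A :&: C != set0 -> A :\: C != set0 -> partition [set A :&: C; A :\: C] A.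
Proof.
move=> AC_n0 AdC_n0; rewrite -[X in partition _ X](setID A C).
apply: partitionU1 AC_n0 _; last first.
  by rewrite disjoints_subset; apply/subsetP => j; rewrite !inE => /andP[_ ->].
by rewrite /partition /cover big_set1 trivIset1 inE eq_sym AdC_n0 eqxx.
Qed.

Lemma card_gt2_avoid2 (T : finType) (W : {set T}) c d : (2 < #|W|)%N ->
  exists w w', [/\ w \in W, w' \in W, w != w', w != c & w != d].
Proof.
move=> W_gt2.
have : (0 < #|W :\: [set c; d]|)%N.
  rewrite cardsD subn_gt0 (leq_ltn_trans _ W_gt2) //.
  by rewrite (leq_trans (subset_leq_card (subsetIr _ _))) // cards2; case: (c != d).
case/card_gt0P => w; rewrite !inE negb_or => /andP[/andP[wc wd] wW].
have : (0 < #|W :\ w|)%N by move: W_gt2; rewrite (cardsD1 w W) wW add1n ltnS => /ltnW.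
case/card_gt0P => w'; rewrite !inE => /andP[w'w w'W].
by exists w, w'; rewrite eq_sym w'w.
Qed.

Section Winners.
Variables (R : realFieldType) (B I : finType) (ps : B -> I -> R) (prio : B -> nat).

Lemma is_w1_max j w i : is_w1 ps prio j w -> ps i j <= ps w j.
Proof. by move=> /forallP/(_ i)/orP[/ltW //|/andP[/eqP -> _]]. Qed.

Lemma is_w1_uniq j w w' : injective prio ->
  is_w1 ps prio j w -> is_w1 ps prio j w' -> w = w'.
Proof.
move=> prio_inj /forallP/(_ w') w'_w /forallP/(_ w) w_w'.
apply: prio_inj; apply/eqP; rewrite eqn_leq.
case/orP: w'_w => [lt_w'w|/andP[/eqP eq_w'w le_ww']].
  case/orP: w_w' => [lt_ww'|/andP[/eqP eq_ww' _]].
    by move: (lt_trans lt_w'w lt_ww'); rewrite ltxx.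
  by move: lt_w'w; rewrite eq_ww' ltxx.
case/orP: w_w' => [|/andP[_ ->]]; last by rewrite le_ww'.
by rewrite eq_w'w ltxx.
Qed.

Lemma sum_is_w1_le (a : I -> R) (T : {pred I}) w i :
  {in T, forall j, 0 <= a j} -> {in T, forall j, is_w1 ps prio j w} ->
  \sum_(j in T) a j * ps i j <= \sum_(j in T) a j * ps w j.
Proof.
move=> a_ge0 T_w; apply: ler_sum => j jT.
by rewrite ler_wpM2l ?a_ge0 // (is_w1_max i (T_w j jT)).
Qed.

End Winners.

Theorem claim3 (R : realFieldType) (B I Sig : finType)
  (p : I -> R) (v : B -> I -> R) (phi : I -> Sig -> R) (prio : B -> nat) :
  (2 <= #|B|)%N ->
  injective prio ->
  (forall j, 0 <= p j) -> \sum_(j : I) p j = 1 ->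
  (forall i j, 0 <= v i j) ->
  (forall j s, 0 <= phi j s <= 1) ->
  (forall j, \sum_(s : Sig) phi j s = 1) ->
  forall s : Sig,
    ~ (non_splittable phi (psi p v) s /\
       (3 <= #|winners phi (psi p v) prio s|)%N).
Proof.
move=> B_ge2 prio_inj _ _ _ _ _ s [not_split W_ge3]; apply: not_split.
set ps := psi p v; set S := Defs.support phi s.
pose x (T : {set I}) i := \sum_(j in T) phi j s * ps i j.
have [c [d [cd max2_c max2_d]]] := max2_le2 (x S) B_ge2.
have [w [w' [wW w'W ww' wc wd]]] := card_gt2_avoid2 c d W_ge3.
move: wW w'W; rewrite !inE => /existsP[j0 /andP[j0S j0w]] /existsP[j1 /andP[j1S j1w']].
set Ww := [set j | is_w1 ps prio j w].
rewrite -/S -/ps in j0S j1S j0w j1w'.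
have j0_in : j0 \in S :&: Ww by rewrite in_setI j0S inE.
have j1_out : j1 \in S :\: Ww.
  rewrite in_setD j1S andbT inE; apply: contra ww' => j1w.
  by rewrite (is_w1_uniq prio_inj j1w j1w').
have xS : x S =1 x (S :\: Ww) \+ x (S :&: Ww).
  by move=> i; rewrite /x (big_setID Ww) /= addrC.
have w_top i : x (S :&: Ww) i <= x (S :&: Ww) w.
  apply: (sum_is_w1_le (prio := prio)) => j; rewrite !inE => /andP[phi_pos jw] //.
  exact: ltW.
have parts_neq : S :&: Ww != S :\: Ww.
  by apply: contraTneq j0_in => ->; rewrite in_setD inE j0w.
rewrite /splittable; exists [set S :&: Ww; S :\: Ww]; split.
- by apply: partition_setID; apply/set0Pn; [exists j0 | exists j1].
- by rewrite cards2 parts_neq.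
rewrite big_setU1 ?big_set1 ?inE //=.
rewrite /rev_sig /rev_on -/S (eq_max2 xS) addrC.
by apply: (max2D_le cd wc wd w_top); rewrite -(eq_max2 xS) -xS.
Qed.
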